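(* Let $(M,d)$ be a metric space and let $S$ be a semitopological semigroup which is left reversible or left amenable. Let $\{T_s:s\in S\}$ be a representation of $S$ on $M$ such that the map $S\times M\ni(s,x)\mapsto T_sx$ is jointly continuous and the family $\{T_s:s\in S\}$ is (as a semigroup under composition) generated by uniformly asymptotically regular mappings. Then every nonempty compact set $K\subset M$ with $T_s(K)\subset K$ for all $s\in S$ contains a common fixed point of all $T_s$, $s\in S$.
   Context: A semitopological semigroup is a semigroup with a Hausdorff topology making $s\mapsto ts$, $s\mapsto st$ continuous for each $t$. A representation: maps $T_s:M\to M$ with $T_{st}=T_s\circ T_t$. $S$ is left reversible if any two closed right ideals of $S$ (sets $I$ with $IS\subset I$) have nonempty intersection. $S$ is left amenable if there is a left invariant mean on $LUC(S)$: with $(l_sf)(t)=f(st)$, $LUC(S)$ is the space of bounded continuous $f$ with $s\mapsto l_sf$ norm-continuous into $C_b(S)$, and a left invariant mean is $\mu\in LUC(S)^*$ with $\|\mu\|=\mu(1)=1$ and $\mu(l_sf)=\mu(f)$. A map $T:M\to M$ is uniformly asymptotically regular if $\lim_n\sup_{x\in M}d(T^{n+1}x,T^nx)=0$. *)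

From HB Require Import structures.
From mathcomp Require Import all_boot all_order all_algebra.
From mathcomp Require Import all_classical all_reals all_analysis.
Set Implicit Arguments. Unset Strict Implicit. Unset Printing Implicit Defensive.
Import Order.TTheory GRing.Theory Num.Theory.
Local Open Scope classical_set_scope.
Local Open Scope ring_scope.

Definition semitopological_semigroup (S : topologicalType) (mul : S -> S -> S) : Prop :=
  hausdorff_space S /\
  (forall a b c : S, mul a (mul b c) = mul (mul a b) c) /\
  (forall t : S, continuous (fun s => mul t s)) /\
  (forall t : S, continuous (fun s => mul s t)).

Definition closed_right_ideal (S : topologicalType) (mul : S -> S -> S) (I : set S) : Prop :=
  I !=set0 /\ closed I /\ (forall i s, I i -> I (mul i s)).

Definition left_reversible (S : topologicalType) (mul : S -> S -> S) : Prop :=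
  forall I J : set S, closed_right_ideal mul I -> closed_right_ideal mul J ->
    I `&` J !=set0.

Definition ltrans (R : realType) (S : Type) (mul : S -> S -> S) (s : S) (f : S -> R) : S -> R :=
  fun t => f (mul s t).

(* LUC(S): bounded continuous real functions f such that s |-> l_s f is
   continuous into C_b(S) with the sup norm. *)
Definition LUC (R : realType) (S : topologicalType) (mul : S -> S -> S) : set (S -> R) :=
  [set f | (exists c : R, forall t, `|f t| <= c) /\ continuous f /\
     (forall s0 : S, forall e : R, 0 < e ->
        exists2 U : set S, nbhs s0 U &
          forall s, U s -> forall t, `|ltrans mul s f t - ltrans mul s0 f t| <= e)].

(* Since ||1|| = 1, ||mu|| = 1 together
   with mu(1) = 1 is the same as |mu f| <= ||f||_sup on LUC(S) plus mu(1) = 1. *)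
Definition left_invariant_mean (R : realType) (S : topologicalType) (mul : S -> S -> S)
  (mu : (S -> R) -> R) : Prop :=
  (forall (a : R) f g, LUC mul f -> LUC mul g -> mu (fun t => a * f t + g t) = a * mu f + mu g) /\
  (forall f (c : R), LUC mul f -> (forall t, `|f t| <= c) -> `|mu f| <= c) /\
  mu (fun _ => 1) = 1 /\
  (forall s f, LUC mul f -> mu (ltrans mul s f) = mu f).

Definition left_amenable (R : realType) (S : topologicalType) (mul : S -> S -> S) : Prop :=
  exists mu : (S -> R) -> R, left_invariant_mean mul mu.

Definition unif_asymp_regular (R : realType) (M : metricType R) (T : M -> M) : Prop :=
  forall e : R, 0 < e -> exists N : nat, forall n : nat, (N <= n)%N ->
    forall x : M, mdist (iter n.+1 T x) (iter n T x) <= e.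

Inductive gen_semigroup (M : Type) (G : set (M -> M)) : (M -> M) -> Prop :=
| gen_base g : G g -> gen_semigroup G g
| gen_comp f g : gen_semigroup G f -> gen_semigroup G g -> gen_semigroup G (f \o g).

From HB Require Import structures.
From mathcomp Require Import all_boot all_order all_algebra.
From mathcomp Require Import all_classical all_reals all_analysis.
From mathcomp Require Import lra.
Import Order.TTheory GRing.Theory Num.Theory numFieldNormedType.Exports.
Local Open Scope classical_set_scope.
Local Open Scope ring_scope.

(* It suffices to find a nonempty F included in K and covered by every T_s,
   i.e. F included in T_s(F).  Then each y in F is, for every n, of the form
   g^n x with x in F, so d(g y, y) <= sup_x d(g^(n+1) x, g^n x) for every
   uniformly asymptotically regular generator g; hence y is fixed by all generators and so by every T_s.
   If S is left reversible, F is the set of cluster points in K of the filter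
   generated by the orbits {T_s x | s in I} of the closed right ideals I; it is
   covered by each T_t since the closure of t I is again a closed right ideal.
   If S is left amenable, F is the support in K of the T-invariant positive
   functional k |-> mu (s |-> k (T_s x)) on bounded continuous functions, which
   is well defined because joint continuity and the compactness of K make
   s |-> k (T_s x) left uniformly continuous. *)

Lemma iter_subset_image {M : Type} {g : M -> M} {F : set M} {y : M} n :
  F `<=` g @` F -> F y -> exists2 x, F x & iter n g x = y.
Proof.
move=> Fg Fy; elim: n => [|n [x Fx <-]]; first by exists y.
by have [x' Fx' <-] := Fg x Fx; exists x' => //; rewrite iterSr.
Qed.

Section AsymptoticRegularity.
Context {R : realType} {M : metricType R}.

Lemma mdist_le_eq (x y : M) : (forall e : R, 0 < e -> mdist x y <= e) -> x = y.
Proof.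
move=> le_e; apply: mdist_positivity; apply/eqP; rewrite eq_le mdist_ge0 andbT.
by apply/unstable.ler_gtP => e /le_e.
Qed.

Lemma unif_asymp_regular_fix (g : M -> M) (F : set M) (y : M) :
  unif_asymp_regular g -> F `<=` g @` F -> F y -> g y = y.
Proof.
move=> gu Fg Fy; apply: mdist_le_eq => e e0.
have [N HN] := gu e e0; have [x _ <-] := iter_subset_image N Fg Fy.
by rewrite -iterS; exact: HN.
Qed.

End AsymptoticRegularity.

Lemma gen_semigroup_fix {M : Type} {G : set (M -> M)} {y : M} {f : M -> M} :
  (forall g, G g -> g y = y) -> gen_semigroup G f -> f y = y.
Proof. by move=> Gy; elim=> [g /Gy //|f' g _ fy _ gy]; rewrite /= gy fy. Qed.

Lemma covered_set_common_fixpoint {R : realType} {M : metricType R} {S : Type}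
    {T : S -> M -> M} {G : set (M -> M)} {F : set M} :
  (forall g, G g -> unif_asymp_regular g) ->
  [set f | exists s, f = T s] = gen_semigroup G ->
  F !=set0 -> (forall s, F `<=` T s @` F) -> exists2 x, F x & forall s, T s x = x.
Proof.
move=> Gu TG [y Fy] FT; exists y => // s.
have Gy g : G g -> g y = y.
  move=> Gg; have [s' gs'] : [set f | exists s, f = T s] g by rewrite TG; exact: gen_base.
  by move: Gg => /Gu; rewrite gs' => Tu; exact: unif_asymp_regular_fix Tu (FT s') Fy.
by apply: gen_semigroup_fix Gy _; rewrite -TG; exists s.
Qed.

Lemma continuous_image_closure {X Y : topologicalType} {f : X -> Y} {A : set X} :
  continuous f -> f @` closure A `<=` closure (f @` A).
Proof.
move=> fc _ [p clp <-] B /fc /clp [a [Aa Ba]].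
by exists (f a); split => //; exists a.
Qed.

Lemma cluster_image_compact (X Y : topologicalType) (f : X -> Y)
    (F : set_system X) (K : set X) :
  Filter F -> hausdorff_space Y -> continuous f -> compact K -> F K ->
  cluster (f @ F) `<=` f @` (K `&` cluster F).
Proof.
move=> FF hY fc cK FK y cly.
pose G := filter_from [set p : set X * set Y | F p.1 /\ nbhs y p.2]
  (fun p => p.1 `&` f @^-1` p.2).
have GF : Filter G.
  apply: filter_from_filter; first by exists (setT, setT); split; exact: filterT.
  move=> [A U] [B V] [FA yU] [FB yV]; exists (A `&` B, U `&` V).
    by split; exact: filterI.
  by move=> z [[Az Bz] [Uz Vz]].
have GP : ProperFilter G.
  apply: filter_from_proper => // -[A U] [FA yU].
  have FfA : F (f @^-1` (f @` A)) by apply: filterS FA => z Az; exists z.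
  by have [_ [[z Az <-] Uz]] := cly _ _ FfA yU; exists z.
have GK : G K by exists (K, setT) => //; split => //; exact: filterT.
have [z [Kz clz]] := cK G GP GK.
exists z; last first.
  apply: hY => A B fzA yB; have zA : nbhs z (f @^-1` A) := fc z A fzA.
  have GB : G (setT `&` f @^-1` B) by exists (setT, B) => //; split => //; exact: filterT.
  by have [w [[_ Bw] Aw]] := clz _ _ GB zA; exists (f w).
split => // A B FA zB.
have GA : G (A `&` f @^-1` setT) by exists (A, setT) => //; split => //; exact: filterT.
by have [w [[Aw _] Bw]] := clz _ _ GA zB; exists w.
Qed.

Section RightIdeals.
Variables (S : topologicalType) (mul : S -> S -> S).

Lemma closed_right_idealT : [set: S] !=set0 -> closed_right_ideal mul setT.
Proof. by move=> S0; split; [|split; [exact: closedT|]]. Qed.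

Lemma closed_right_idealI (I J : set S) : left_reversible mul ->
  closed_right_ideal mul I -> closed_right_ideal mul J ->
  closed_right_ideal mul (I `&` J).
Proof.
move=> rev DI DJ; split; first exact: rev.
have [_ [cI IS]] := DI; have [_ [cJ JS]] := DJ.
by split; [exact: closedI|move=> i s [Ii Ji]; split; [exact: IS|exact: JS]].
Qed.

Lemma closed_right_ideal_closure_lmul (t : S) (I : set S) :
  semitopological_semigroup mul -> closed_right_ideal mul I ->
  closed_right_ideal mul (closure (mul t @` I)).
Proof.
move=> [_ [assoc [_ rc]]] [[i0 Ii0] [_ IS]]; split.
  by exists (mul t i0); apply: subset_closure; exists i0.
split=> [|j s Jj]; first exact: closed_closure.
have : closure (mul^~ s @` (mul t @` I)) (mul j s).
  by apply: (continuous_image_closure (rc s)); exists j.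
apply: closureS => _ [_ [i Ii <-] <-].
by rewrite -assoc; exists (mul i s) => //; exact: IS.
Qed.
End RightIdeals.

Section JointContinuity.
Context {S M : topologicalType} {T : S -> M -> M}.
Hypothesis Tcont : continuous (fun p : S * M => T p.1 p.2).

Lemma continuous_orbit (z : M) : continuous (fun s => T s z).
Proof.
move=> s.
apply: (@continuous_comp _ _ _ (fun s => (s, z)) (fun p : S * M => T p.1 p.2)).
  by apply: cvg_pair => //=; exact: cvg_cst.
exact: Tcont.
Qed.

Lemma continuous_action (s : S) : continuous (T s).
Proof. exact: (proj2 (continuous_curry Tcont) s). Qed.

End JointContinuity.

Section LeftReversible.
Context {R : realType} {M : metricType R} {S : topologicalType}.
Variables (mul : S -> S -> S) (T : S -> M -> M) (x : M).
Hypothesis semi : semitopological_semigroup mul.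
Hypothesis rev : left_reversible mul.
Hypothesis Tmul : forall s t : S, T (mul s t) = T s \o T t.
Hypothesis Tcont : continuous (fun p : S * M => T p.1 p.2).
Hypothesis S0 : [set: S] !=set0.

Definition orbit_filter : set_system M :=
  filter_from (closed_right_ideal mul) (fun I => (fun s => T s x) @` I).

Lemma orbit_filter_proper : ProperFilter orbit_filter.
Proof.
apply: filter_from_proper; last by move=> I [[s Is] _]; exists (T s x), s.
apply: filter_from_filter; first by exists setT; exact: closed_right_idealT.
move=> I J DI DJ; exists (I `&` J); first exact: closed_right_idealI.
by move=> _ [s [Is Js] <-]; split; exists s.
Qed.

Lemma cluster_orbit_filter_image (t : S) :
  cluster orbit_filter `<=` cluster (T t @ orbit_filter).
Proof.
rewrite !clusterE => y cly A [I DI IA].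
have FJ : orbit_filter ((fun s => T s x) @` closure (mul t @` I)).
  by exists (closure (mul t @` I)) => //; exact: closed_right_ideal_closure_lmul.
have : closure (closure ((fun s => T s x) @` (mul t @` I))) y.
  move: (cly _ FJ); apply: closureS.
  exact: continuous_image_closure (continuous_orbit Tcont x).
rewrite -(closure_id _).1; last exact: closed_closure.
by apply: closureS => _ [_ [s Is <-] <-]; rewrite Tmul; apply: IA; exists s.
Qed.

Lemma left_reversible_covered_set (K : set M) :
  K x -> compact K -> (forall s, T s @` K `<=` K) ->
  exists F : set M, [/\ F `<=` K, F !=set0 & forall t, F `<=` T t @` F].
Proof.
move=> Kx cK KT; have FP := orbit_filter_proper.
have FK : orbit_filter K.
  by exists setT; [exact: closed_right_idealT|move=> _ [s _ <-]; apply: KT; exists x].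
exists (K `&` cluster orbit_filter); split => //; first exact: cK _ FP FK.
move=> t y [_ /(cluster_orbit_filter_image t)].
apply: cluster_image_compact => //; [exact: metric_hausdorff|exact: continuous_action].
Qed.

End LeftReversible.

Definition bounded_continuous {R : realType} {M : topologicalType} (k : M -> R) :=
  continuous k /\ exists c : R, forall z, `|k z| <= c.

Section BoundedContinuous.
Context {R : realType} {M : topologicalType}.

Lemma bounded_continuous_cst (a : R) : bounded_continuous (fun _ : M => a).
Proof. by split; [move=> z; exact: cvg_cst|exists `|a|]. Qed.

Lemma bounded_continuous_lin (a : R) {k1 k2 : M -> R} :
  bounded_continuous k1 -> bounded_continuous k2 ->
  bounded_continuous (fun z => a * k1 z + k2 z).
Proof.
move=> [c1 [b1 hb1]] [c2 [b2 hb2]]; split.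
  by move=> z; apply: cvgD; [exact: cvgMl_tmp (c1 z)|exact: c2].
exists (`|a| * b1 + b2) => z.
by rewrite (le_trans (ler_normD _ _))// normrM lerD ?ler_wpM2l.
Qed.

Lemma bounded_continuous_comp {N : topologicalType} {f : N -> M} {k : M -> R} :
  continuous f -> bounded_continuous k -> bounded_continuous (k \o f).
Proof.
move=> fc [kc [b hb]]; split; last by exists b => z; exact: hb.
by move=> z; exact: continuous_comp (fc z) (kc (f z)).
Qed.

End BoundedContinuous.

Lemma near_compact_uniform {R : realType} {S X : topologicalType}
    {h : S * X -> R} {K : set X} {e : R} (s0 : S) :
  continuous h -> compact K -> 0 < e ->
  \forall s \near s0, K `<=` (fun z => `|h (s, z) - h (s0, z)| <= e).
Proof.
move=> hc cK e0.
apply: (proj1 (compact_near_coveringP K) cK S (nbhs s0)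
  (fun s z => `|h (s, z) - h (s0, z)| <= e)) => z Kz.
have e2 : 0 < e / 2 by rewrite divr_gt0.
have /cvgrPdist_lt /(_ _ e2) [[A B] /= [s0A zB] AB] := hc (s0, z).
exists (B, A) => // -[z' s] /= [Bz' As].
have h1 := AB (s, z') (conj As Bz').
have h2 := AB (s0, z') (conj (nbhs_singleton s0A) Bz').
rewrite -[h (s, z') - _](subrKA (h (s0, z))).
rewrite (le_trans (ler_normD _ _))// [e](splitr e) lerD// ltW//.
by rewrite distrC.
Qed.

Lemma max0_dist {R : realDomainType} (a b : R) :
  `|Num.max 0 a - Num.max 0 b| <= `|a - b|.
Proof.
have := ler_norm (a - b); have := ler_norm (b - a); rewrite distrC => h1 h2.
rewrite ler_norml; have [ha|ha] := leP 0 a; have [hb|hb] := leP 0 b;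
  rewrite ?(max_r ha) ?(max_r hb) ?(max_l (ltW ha)) ?(max_l (ltW hb));
  apply/andP; split; lra.
Qed.

Section Bump.
Context {R : realType} {M : metricType R}.

Definition bump (y : M) (r : R) (z : M) : R := Num.max 0 (r - mdist y z).

Lemma bump_ge0 y r z : 0 <= bump y r z.
Proof. by rewrite /bump le_max lexx. Qed.

Lemma bump_lipschitz y r z z' : `|bump y r z - bump y r z'| <= mdist z z'.
Proof.
apply: le_trans (max0_dist _ _) _.
rewrite ler_norml; apply/andP; split.
  by have := metric_triangle y z' z; rewrite (metric_sym z' z); lra.
by have := metric_triangle y z z'; lra.
Qed.

Lemma bounded_continuous_bump y {r : R} : 0 <= r -> bounded_continuous (bump y r).
Proof.
move=> r0; split.
  move=> z; apply/cvgrPdist_lt => e e0.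
  apply: filterS (nbhsx_ballx z e e0) => z'; rewrite ballEmdist /= => zz'.
  exact: le_lt_trans (bump_lipschitz y r z z') zz'.
exists r => z; rewrite ger0_norm ?bump_ge0 // /bump ge_max r0 /=.
by have := mdist_ge0 y z; lra.
Qed.

Lemma bump_le y y' r z : mdist y y' < r / 2 -> bump y' (r / 2) z <= bump y r z.
Proof.
move=> yy'; rewrite /bump ge_max le_max lexx /= le_max.
by have := metric_triangle y y' z => tri; apply/orP; right; lra.
Qed.

End Bump.

Section PositiveFunctional.
Context {R : realType} {M : metricType R} (K : set M) (phi : (M -> R) -> R).
Hypothesis cK : compact K.
Hypothesis phi_lin : forall (a : R) (k1 k2 : M -> R),
  bounded_continuous k1 -> bounded_continuous k2 ->
  phi (fun z => a * k1 z + k2 z) = a * phi k1 + phi k2.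
Hypothesis phi1 : phi (fun _ => 1) = 1.
Hypothesis phi_ge0 : forall k : M -> R, bounded_continuous k ->
  (forall z, K z -> 0 <= k z) -> 0 <= phi k.

Lemma phi_cst (a : R) : phi (fun _ => a) = a.
Proof.
have h1 := bounded_continuous_cst (M := M) (1 : R).
have phi0 : phi (fun _ => 0) = 0.
  have -> : (fun _ : M => 0 : R) = (fun z => -1 * (fun _ => 1) z + (fun _ => 1) z).
    by apply: funext => z; rewrite mulN1r addNr.
  by rewrite phi_lin // phi1 mulN1r addNr.
have -> : (fun _ : M => a) = (fun z => a * (fun _ => 1) z + (fun _ => 0) z).
  by apply: funext => z; rewrite mulr1 addr0.
by rewrite phi_lin ?phi1 ?phi0 ?mulr1 ?addr0 //; exact: bounded_continuous_cst.
Qed.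

Lemma phi_le (k1 k2 : M -> R) : bounded_continuous k1 -> bounded_continuous k2 ->
  (forall z, K z -> k1 z <= k2 z) -> phi k1 <= phi k2.
Proof.
move=> h1 h2 le12.
have K12 : forall z, K z -> 0 <= -1 * k1 z + k2 z by move=> z /le12; lra.
by have := phi_ge0 _ (bounded_continuous_lin (-1) h1 h2) K12; rewrite phi_lin //; lra.
Qed.

Definition support := [set y | K y /\ forall r, 0 < r -> 0 < phi (bump y r)].

Lemma closed_support : closed support.
Proof.
move=> y cly; split.
  have cKc : closed K := compact_closed (@metric_hausdorff R M) cK.
  by apply: cKc; apply: closureS cly => z [].
move=> r r0; have r2 : 0 < r / 2 by rewrite divr_gt0.
have [y' [[_ Fy'] /=]] := cly _ (nbhsx_ballx y (r / 2) r2).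
rewrite ballEmdist /= => yy'.
apply: lt_le_trans (Fy' _ r2) _; apply: phi_le.
- exact: bounded_continuous_bump (ltW r2).
- exact: bounded_continuous_bump (ltW r0).
- by move=> z _; exact: bump_le.
Qed.

Definition phi_null (H : M -> R) :=
  [/\ bounded_continuous H, forall z, 0 <= H z & phi H <= 0].

Lemma phi_null_add (H1 H2 : M -> R) :
  phi_null H1 -> phi_null H2 -> phi_null (fun z => 1 * H1 z + H2 z).
Proof.
move=> [h1 p1 f1] [h2 p2 f2]; split.
- exact: bounded_continuous_lin.
- by move=> z; rewrite mul1r addr_ge0.
- by rewrite phi_lin //; lra.
Qed.

Lemma phi_null_cover {C : set M} : compact C ->
  (forall z, C z -> exists2 r, 0 < r & phi (bump z r) <= 0) ->
  exists H, phi_null H /\ exists2 c, 0 < c & forall z, C z -> c <= H z.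
Proof.
(* Otherwise the sets {z in C | H z < c} form a proper filter base, whose
   cluster point in C would carry no null bump. *)
move=> cC hC; apply: contrapT => nH.
pose D := [set p : (M -> R) * R | phi_null p.1 /\ 0 < p.2].
pose B (p : (M -> R) * R) := C `&` [set z | p.1 z < p.2].
have D0 : D (fun _ => 0, 1).
  by split=> //; split=> //; [exact: bounded_continuous_cst|rewrite phi_cst].
have PF : ProperFilter (filter_from D B).
  apply: filter_from_proper; last first.
    move=> [H c] [nullH c0]; apply: contrapT => nB; apply: nH.
    exists H; split=> //; exists c => // z Cz.
    by rewrite leNgt; apply/negP => Hz; apply: nB; exists z.
  apply: filter_from_filter; first by exists (fun _ => 0, 1).
  move=> [H1 c1] [H2 c2] [n1 c1p] [n2 c2p].
  exists ((fun z => 1 * H1 z + H2 z), Num.min c1 c2).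
    by split; [exact: phi_null_add|rewrite lt_min c1p c2p].
  move=> z [Cz /=]; rewrite lt_min mul1r => /andP [l1 l2].
  have q1 : 0 <= H1 z by case: n1.
  have q2 : 0 <= H2 z by case: n2.
  by split; split => //=; lra.
have FC : filter_from D B C by exists (fun _ => 0, 1) => // z [].
have [z [Cz clz]] := cC _ PF FC.
have [r r0 fr] := hC z Cz; have r2 : 0 < r / 2 by rewrite divr_gt0.
have FB : filter_from D B (B (bump z r, r / 2)).
  exists (bump z r, r / 2) => //; split=> //; split=> //.
  - exact: bounded_continuous_bump (ltW r0).
  - exact: bump_ge0.
have [w [[_ /= bw] /=]] := clz _ _ FB (nbhsx_ballx z (r / 2) r2).
rewrite ballEmdist /= => zw; move: bw; rewrite /bump.
have : r - mdist z w <= Num.max 0 (r - mdist z w) by rewrite le_max lexx orbT.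
lra.
Qed.

Lemma phi_le0_off_support (k : M -> R) : bounded_continuous k ->
  (forall z, K z -> 0 <= k z) -> (forall z, support z -> k z <= 0) -> phi k <= 0.
Proof.
move=> hk k0 ksupp; apply/unstable.ler_gtP => e e0.
have [kc [B hB]] := hk.
pose C := K `&` [set z | e <= k z].
have cC : compact C.
  apply: compact_closedI cK _.
  exact: (proj1 (continuous_closedP k) kc [set u : R | e <= u] (@closed_ge R e)).
have hC z : C z -> exists2 r, 0 < r & phi (bump z r) <= 0.
  move=> [Kz ez]; apply: contrapT => nr.
  have /ksupp : support z.
    by split=> // r r0; rewrite ltNge; apply/negP => h; apply: nr; exists r.
  by move: ez => /=; lra.
have [H [[hH H0 phiH] [c c0 Hc]]] := phi_null_cover cC hC.
(* On K, k is dominated by the phi-null H scaled to exceed sup |k| on C, plus e. *)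
have Bc0 : 0 <= `|B| / c by rewrite divr_ge0 // ltW.
have Bcc : `|B| / c * c = `|B| by rewrite divfK // gt_eqF.
have : phi k <= phi (fun z => `|B| / c * H z + (fun _ => e) z).
  apply: phi_le => //; first exact: bounded_continuous_lin (bounded_continuous_cst e).
  move=> z Kz; have kB : k z <= `|B|.
    by apply: le_trans (ler_norm _) (le_trans (hB z) (ler_norm _)).
  have := H0 z; have [ez|ez] := leP e (k z); last by nra.
  by have := Hc z (conj Kz ez); nra.
by rewrite phi_lin ?phi_cst //; [nra|exact: bounded_continuous_cst].
Qed.

Lemma support_neq0 : support !=set0.
Proof.
apply: contrapT => supp0.
suff : (1 : R) <= 0 by rewrite ler10.
rewrite -phi1; apply: phi_le0_off_support => [|z _|z suppz].
- exact: bounded_continuous_cst.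
- exact: ler01.
- by exfalso; apply: supp0; exists z.
Qed.

Lemma support_covered (f : M -> M) : continuous f ->
  (forall k, bounded_continuous k -> phi (k \o f) = phi k) ->
  support `<=` f @` support.
Proof.
move=> fc phif y [Ky suppy]; apply: contrapT => ny.
have cS : compact support.
  by apply: subclosed_compact closed_support cK _ => z [].
have cfS : compact (f @` support).
  exact: continuous_compact (continuous_subspaceT fc) cS.
have : nbhs y (~` (f @` support)).
  apply: open_nbhs_nbhs; split=> //; apply: closed_openC.
  exact: compact_closed (@metric_hausdorff R M) cfS.
move=> /nbhs_ballP [r r0 yr].
have hb := bounded_continuous_bump y (ltW r0).
suff : phi (bump y r \o f) <= 0 by rewrite phif // leNgt suppy.
apply: phi_le0_off_support => [|z _|z suppz].
- exact: bounded_continuous_comp fc hb.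
- exact: bump_ge0.
- rewrite /= /bump ge_max lexx /= subr_le0 leNgt; apply/negP => yfz.
  by apply: (yr (f z)); [rewrite ballEmdist|exists z].
Qed.

End PositiveFunctional.

Section LeftAmenable.
Context {R : realType} {M : metricType R} {S : topologicalType}.
Variables (mul : S -> S -> S) (T : S -> M -> M) (mu : (S -> R) -> R).
Variables (K : set M) (x : M).
Hypothesis Tmul : forall s t : S, T (mul s t) = T s \o T t.
Hypothesis Tcont : continuous (fun p : S * M => T p.1 p.2).
Hypothesis mu_mean : left_invariant_mean mul mu.
Hypothesis Kx : K x.
Hypothesis cK : compact K.
Hypothesis KT : forall s, T s @` K `<=` K.

Definition orbit_mean (k : M -> R) : R := mu (fun s => k (T s x)).

Lemma orbit_in (s : S) : K (T s x).
Proof. by apply: KT; exists x. Qed.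

Lemma LUC_orbit {k : M -> R} : bounded_continuous k -> LUC mul (fun s => k (T s x)).
Proof.
move=> [kc [b hb]]; split; first by exists b.
have hc : continuous (fun p : S * M => k (T p.1 p.2)).
  by move=> p; apply: continuous_comp (Tcont p) (kc _).
split=> [s|s0 e e0]; first exact: continuous_comp (continuous_orbit Tcont x s) (kc _).
exists [set s | K `<=` (fun z => `|k (T s z) - k (T s0 z)| <= e)].
  exact: near_compact_uniform s0 hc cK e0.
by move=> s Us t; rewrite /ltrans !Tmul; exact: Us (orbit_in t).
Qed.

Lemma orbit_mean_lin (a : R) {k1 k2 : M -> R} :
  bounded_continuous k1 -> bounded_continuous k2 ->
  orbit_mean (fun z => a * k1 z + k2 z) = a * orbit_mean k1 + orbit_mean k2.
Proof. by move=> h1 h2; exact: mu_mean.1 a _ _ (LUC_orbit h1) (LUC_orbit h2). Qed.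

Lemma orbit_mean1 : orbit_mean (fun _ => 1) = 1.
Proof. exact: mu_mean.2.2.1. Qed.

Lemma orbit_mean_ge0 (k : M -> R) : bounded_continuous k ->
  (forall z, K z -> 0 <= k z) -> 0 <= orbit_mean k.
Proof.
move=> hk k0; have [_ [c hc]] := hk.
have hg := bounded_continuous_lin (- (c / 2)) (bounded_continuous_cst 1) hk.
have : `|orbit_mean (fun z => - (c / 2) * 1 + k z)| <= c / 2.
  apply: mu_mean.2.1 (LUC_orbit hg) _ => s /=.
  have := k0 _ (orbit_in s); have := hc (T s x); rewrite ler_norml => /andP [_ kc] k0s.
  by rewrite mulr1 ler_norml; apply/andP; split; lra.
rewrite (orbit_mean_lin _ (bounded_continuous_cst 1) hk) orbit_mean1.
by rewrite ler_norml => /andP [? _]; lra.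
Qed.

Lemma orbit_mean_comp (t : S) (k : M -> R) : bounded_continuous k ->
  orbit_mean (k \o T t) = orbit_mean k.
Proof.
move=> hk; rewrite /orbit_mean -(mu_mean.2.2.2 t _ (LUC_orbit hk)).
by congr mu; apply: funext => s; rewrite /ltrans Tmul.
Qed.

Lemma left_amenable_covered_set :
  exists F : set M, [/\ F `<=` K, F !=set0 & forall t, F `<=` T t @` F].
Proof.
exists (support K orbit_mean); split.
- by move=> z [].
- exact: support_neq0 _ _ cK orbit_mean_lin orbit_mean1 orbit_mean_ge0.
- move=> t; exact: support_covered _ _ cK orbit_mean_lin orbit_mean1 orbit_mean_ge0 _
    (continuous_action Tcont t) (orbit_mean_comp t).
Qed.

End LeftAmenable.

Theorem lemma3p13 (R : realType) (M : metricType R)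
  (S : topologicalType) (mul : S -> S -> S) (T : S -> M -> M) :
  semitopological_semigroup mul ->
  (left_reversible mul \/ left_amenable R mul) ->
  (forall s t : S, T (mul s t) = T s \o T t) ->
  continuous (fun p : S * M => T p.1 p.2) ->
  (exists G : set (M -> M), (forall g, G g -> unif_asymp_regular g) /\
     [set f | exists s, f = T s] = gen_semigroup G) ->
  forall K : set M, K !=set0 -> compact K -> (forall s, T s @` K `<=` K) ->
  exists2 x, K x & forall s, T s x = x.
Proof.
move=> semi rev_amen Tmul Tcont [G [Gu TG]] K [x Kx] cK KT.
have [S0|S0] := pselect ([set: S] !=set0); last first.
  by exists x => // s; exfalso; apply: S0; exists s.
have [F [FK F0 FT]] : exists F : set M,
    [/\ F `<=` K, F !=set0 & forall t, F `<=` T t @` F].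
  case: rev_amen => [rev|[mu mu_mean]].
  - exact: left_reversible_covered_set semi rev Tmul Tcont S0 K Kx cK KT.
  - exact: left_amenable_covered_set Tmul Tcont mu_mean Kx cK KT.
have [y Fy yT] := covered_set_common_fixpoint Gu TG F0 FT.
by exists y => //; exact: FK.
Qed.
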